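(* Let $\beta_\bullet\in\{\beta,\beta_v\}$, let $\to_{\beta_\bullet}$ be the contextual closure of the rule $\beta_\bullet$ on $\Lambda_{\mathcal O}$, and let $\rightsquigarrow_U$ be the unbiased iteration of an associated surface reduction (as defined in the context). Then: 1. $\rightsquigarrow_U$ is RD-diamond: whenever $M_1\leftsquigarrow_U M\rightsquigarrow_U M_2$, either $M_1=M_2$ or there is $P$ with $M_1\rightsquigarrow_UP$ and $M_2\rightsquigarrow_UP$. 2. $\rightsquigarrow_U$ has the same normal forms as $\to_{\beta_\bullet}$. 3. If $N$ is $\beta_\bullet$-normal and $M\to_{\beta_\bullet}^*N$, then $M\rightsquigarrow_U^*N$.
   Context: Terms: $M::=x\mid\lambda x.M\mid MM\mid \mathsf{op}(M,\dots,M)$ where $\mathsf{op}$ ranges over a (possibly empty) set $\mathcal O$ of operator symbols with fixed arities, up to renaming of bound variables; this set is $\Lambda_{\mathcal O}$. Values: $V::=x\mid\lambda x.M$. Contexts: $C::=[\,]\mid MC\mid CM\mid\lambda x.C\mid\mathsf{op}(M,\dots,C,\dots,M)$. Rules: $(\lambda x.M)N\mapsto_\beta M\{N/x\}$; $(\lambda x.M)V\mapsto_{\beta_v}M\{V/x\}$ for $V$ a value. $\to_{\beta_\bullet}$ is the closure of the rule under all contexts. Head contexts $H::=[\,]\mid\lambda x.H\mid HM$; weak $W::=[\,]\mid WM\mid MW$; left $L::=[\,]\mid LM\mid VL$; right $R::=[\,]\mid MR\mid RV$. Surface reduction $\to_s$: for $\beta$, the closure of $\beta$ under head contexts; for $\beta_v$,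 the closure of $\beta_v$ under weak, or left, or right contexts (any one choice). $\rightsquigarrow_U\subseteq\to_{\beta_\bullet}$ is defined inductively: if $M\to_sM'$ then $M\rightsquigarrow_UM'$; if $M$ is $\to_s$-normal, $M\rightsquigarrow_UM'$ is given by: $\lambda x.P\rightsquigarrow_U\lambda x.P'$ if $P\rightsquigarrow_UP'$; $PQ\rightsquigarrow_UP'Q$ if $P\rightsquigarrow_UP'$; $PQ\rightsquigarrow_UPQ'$ if $Q\rightsquigarrow_UQ'$; $\mathsf{op}(\dots,P_i,\dots)\rightsquigarrow_U\mathsf{op}(\dots,P_i',\dots)$ if $P_i\rightsquigarrow_UP_i'$. *)

(* Lambda calculus with operators, de Bruijn indices
   (terms are thus identified up to renaming of bound variables). *)
From Stdlib Require Import List Arith Relations.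
Import ListNotations.

Section Lambda.

Variable Op : Type.
Variable arity : Op -> nat.

Inductive tm : Type :=
| Var : nat -> tm
| Lam : tm -> tm
| App : tm -> tm -> tm
| Opr : Op -> list tm -> tm.

(* Well-formed terms: operators applied to the right number of arguments.
   Lambda_O is the set of well-formed terms. *)
Inductive wf : tm -> Prop :=
| wf_var : forall n, wf (Var n)
| wf_lam : forall M, wf M -> wf (Lam M)
| wf_app : forall M N, wf M -> wf N -> wf (App M N)
| wf_opr : forall o l, length l = arity o -> Forall wf l -> wf (Opr o l).

Fixpoint lift (k : nat) (t : tm) : tm :=
  match t with
  | Var n => if n <? k then Var n else Var (S n)
  | Lam b => Lam (lift (S k) b)
  | App a b => App (lift k a) (lift k b)
  | Opr o l => Opr o (map (lift k) l)
  end.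

(* subst k u t : replace index k by u (u already lifted to depth k),
   decrementing indices > k. *)
Fixpoint subst (k : nat) (u : tm) (t : tm) : tm :=
  match t with
  | Var n => if n =? k then u else if n <? k then Var n else Var (pred n)
  | Lam b => Lam (subst (S k) (lift 0 u) b)
  | App a b => App (subst k u a) (subst k u b)
  | Opr o l => Opr o (map (subst k u) l)
  end.

Definition subst0 (N M : tm) : tm := subst 0 N M.

Definition is_value (t : tm) : Prop :=
  match t with Var _ | Lam _ => True | _ => False end.

(* The calculus: beta with head surface reduction, or beta_v with one of the
   three choices of surface contexts (weak, left, right). *)
Inductive calculus : Type := CbN | CbV_weak | CbV_left | CbV_right.

Inductive beta_rule : tm -> tm -> Prop :=
| beta_r : forall M N, beta_rule (App (Lam M) N) (subst0 N M).

Inductive betav_rule : tm -> tm -> Prop :=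
| betav_r : forall M V, is_value V -> betav_rule (App (Lam M) V) (subst0 V M).

Definition rule (c : calculus) : tm -> tm -> Prop :=
  match c with CbN => beta_rule | _ => betav_rule end.

Inductive full (r : tm -> tm -> Prop) : tm -> tm -> Prop :=
| full_rule : forall M M', r M M' -> full r M M'
| full_lam : forall M M', full r M M' -> full r (Lam M) (Lam M')
| full_appl : forall M M' N, full r M M' -> full r (App M N) (App M' N)
| full_appr : forall M N N', full r N N' -> full r (App M N) (App M N')
| full_opr : forall o l1 l2 M M',
    full r M M' -> full r (Opr o (l1 ++ M :: l2)) (Opr o (l1 ++ M' :: l2)).

Inductive head (r : tm -> tm -> Prop) : tm -> tm -> Prop :=
| head_rule : forall M M', r M M' -> head r M M'
| head_lam : forall M M', head r M M' -> head r (Lam M) (Lam M')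
| head_appl : forall M M' N, head r M M' -> head r (App M N) (App M' N).

Inductive weak (r : tm -> tm -> Prop) : tm -> tm -> Prop :=
| weak_rule : forall M M', r M M' -> weak r M M'
| weak_appl : forall M M' N, weak r M M' -> weak r (App M N) (App M' N)
| weak_appr : forall M N N', weak r N N' -> weak r (App M N) (App M N').

Inductive left (r : tm -> tm -> Prop) : tm -> tm -> Prop :=
| left_rule : forall M M', r M M' -> left r M M'
| left_appl : forall M M' N, left r M M' -> left r (App M N) (App M' N)
| left_appr : forall V N N', is_value V -> left r N N' -> left r (App V N) (App V N').

Inductive right (r : tm -> tm -> Prop) : tm -> tm -> Prop :=
| right_rule : forall M M', r M M' -> right r M M'
| right_appr : forall M N N', right r N N' -> right r (App M N) (App M N')
| right_appl : forall M M' V, is_value V -> right r M M' -> right r (App M V) (App M' V).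

Definition step (c : calculus) : tm -> tm -> Prop := full (rule c).

Definition surf (c : calculus) : tm -> tm -> Prop :=
  match c with
  | CbN => head beta_rule
  | CbV_weak => weak betav_rule
  | CbV_left => left betav_rule
  | CbV_right => right betav_rule
  end.

Definition normal (r : tm -> tm -> Prop) (M : tm) : Prop := forall N, ~ r M N.

Inductive unb (c : calculus) : tm -> tm -> Prop :=
| unb_surf : forall M M', surf c M M' -> unb c M M'
| unb_lam : forall P P', normal (surf c) (Lam P) -> unb c P P' ->
    unb c (Lam P) (Lam P')
| unb_appl : forall P P' Q, normal (surf c) (App P Q) -> unb c P P' ->
    unb c (App P Q) (App P' Q)
| unb_appr : forall P Q Q', normal (surf c) (App P Q) -> unb c Q Q' ->
    unb c (App P Q) (App P Q')
| unb_opr : forall o l1 l2 P P', normal (surf c) (Opr o (l1 ++ P :: l2)) ->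
    unb c P P' -> unb c (Opr o (l1 ++ P :: l2)) (Opr o (l1 ++ P' :: l2)).

End Lambda.

Arguments Var {Op}. Arguments Lam {Op}. Arguments App {Op}. Arguments Opr {Op}.
Arguments wf {Op}. Arguments lift {Op}. Arguments subst {Op}. Arguments subst0 {Op}.
Arguments is_value {Op}. Arguments beta_rule {Op}. Arguments betav_rule {Op}.
Arguments rule {Op}. Arguments full {Op}. Arguments head {Op}. Arguments weak {Op}.
Arguments left {Op}. Arguments right {Op}. Arguments step {Op}. Arguments surf {Op}.
Arguments normal {Op}. Arguments unb {Op}.

(* Surface reduction is diamond, and a step of the full reduction out of a
   surface-normal term is internal and leaves the term surface-normal.  As the
   unbiased reduction enters a term only once its surface is normal, the diamond
   property propagates through its inductive definition, and it has a step exactly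
   when the full reduction has one.  For normalizing reductions, Takahashi's method
   factorizes parallel reduction as surface reduction followed by internal parallel
   reduction; hence M ->* N with N normal splits as M ->s* Z ->* N with Z
   surface-normal, all later steps happen inside the immediate subterms of Z, and
   induction on N concludes. *)

From Stdlib Require Import List Relations Arith Lia Classical.
Import ListNotations.

Section UnbiasedReduction.
Variable Op : Type.
Local Notation term := (tm Op).
Local Notation rt R := (clos_refl_trans term R).

(** * De Bruijn lifting and substitution *)

Definition tm_nested_ind (P : term -> Prop)
  (HVar : forall n, P (Var n)) (HLam : forall t, P t -> P (Lam t))
  (HApp : forall t u, P t -> P u -> P (App t u))
  (HOpr : forall o l, Forall P l -> P (Opr o l)) : forall t, P t :=
  fix F t := match t with
  | Var n => HVar n
  | Lam t => HLam t (F t)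
  | App t u => HApp t u (F t) (F u)
  | Opr o l => HOpr o l ((fix G l := match l return Forall P l with
        | nil => Forall_nil P | x :: r => Forall_cons x (F x) (G r) end) l)
  end.

Ltac index_cases := repeat (cbn [lift subst]; match goal with
  | |- context [?a <? ?b] => destruct (Nat.ltb_spec a b)
  | |- context [?a =? ?b] => destruct (Nat.eqb_spec a b)
  end); cbn [lift subst]; try (exfalso; lia); try reflexivity.

Ltac map_congr := f_equal; rewrite ?map_map; apply map_ext_in; intros;
  match goal with H : Forall _ _ |- _ => rewrite Forall_forall in H; apply H; auto end.

Lemma lift_lift (u : term) i j : j <= i -> lift (S i) (lift j u) = lift j (lift i u).
Proof.
  revert i j; induction u using tm_nested_ind; intros i j Hji; simpl.
  - index_cases; f_equal; lia.
  - f_equal; apply IHu; lia.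
  - f_equal; auto.
  - map_congr.
Qed.

Lemma subst_lift (t : term) i u : subst i u (lift i t) = t.
Proof.
  revert i u; induction t using tm_nested_ind; intros i u; simpl.
  - index_cases; f_equal; lia.
  - f_equal; auto.
  - f_equal; auto.
  - rewrite <- (map_id l) at 2; map_congr.
Qed.

Lemma lift_subst_ge (t : term) j i u : j <= i ->
  lift j (subst i u t) = subst (S i) (lift j u) (lift j t).
Proof.
  revert j i u; induction t using tm_nested_ind; intros j i u Hji; simpl.
  - index_cases; f_equal; lia.
  - f_equal; rewrite IHt by lia; f_equal; apply lift_lift; lia.
  - f_equal; auto.
  - map_congr.
Qed.

Lemma lift_subst_le (t : term) i j u : i <= j ->
  lift j (subst i u t) = subst i (lift j u) (lift (S j) t).
Proof.
  revert i j u; induction t using tm_nested_ind; intros i j u Hij; simpl.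
  - index_cases; f_equal; lia.
  - f_equal; rewrite IHt by lia; f_equal; apply lift_lift; lia.
  - f_equal; auto.
  - map_congr.
Qed.

Lemma subst_subst (t : term) i j N u : i <= j ->
  subst j u (subst i N t) = subst i (subst j u N) (subst (S j) (lift i u) t).
Proof.
  revert i j N u; induction t using tm_nested_ind; intros i j N u Hij; simpl.
  - index_cases; try (f_equal; lia); now rewrite subst_lift.
  - f_equal; rewrite IHt by lia; f_equal.
    + symmetry; apply lift_subst_ge; lia.
    + f_equal; apply lift_lift; lia.
  - f_equal; auto.
  - map_congr.
Qed.

Lemma lift_subst0 (B N : term) k : lift k (subst0 N B) = subst0 (lift k N) (lift (S k) B).
Proof. apply lift_subst_le; lia. Qed.

Lemma subst_subst0 (B N u : term) k :
  subst k u (subst0 N B) = subst0 (subst k u N) (subst (S k) (lift 0 u) B).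
Proof. apply subst_subst; lia. Qed.

Lemma value_liftE (V : term) k : is_value (lift k V) <-> is_value V.
Proof. destruct V; simpl; try tauto; destruct (n <? k); simpl; tauto. Qed.

Lemma value_subst (V u : term) k : is_value u -> is_value V -> is_value (subst k u V).
Proof.
  destruct V; simpl; try tauto; destruct (n =? k); auto; destruct (n <? k); simpl; auto.
Qed.

Lemma value_subst_inv (V u : term) k : is_value (subst k u V) -> is_value V.
Proof. destruct V; simpl; tauto. Qed.

Lemma value_dec (t : term) : is_value t \/ ~ is_value t.
Proof. destruct t; simpl; tauto. Qed.

Lemma calculus_eq_dec (c c' : calculus) : {c = c'} + {c <> c'}.
Proof. decide equality. Qed.

(** * Surface reduction *)

(* The side conditions that distinguish the four calculi.  [valid_arg c N]: a
   redex with argument [N] may be fired; [fun_surface c N] (resp.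
   [arg_surface c A]): the left (resp. right) subterm of [App _ N] (resp.
   [App A _]) is a surface position. *)
Definition valid_arg (c : calculus) (N : term) : Prop := c = CbN \/ is_value N.
Definition fun_surface (c : calculus) (N : term) : Prop := c = CbV_right -> is_value N.
Definition arg_surface (c : calculus) (A : term) : Prop :=
  c <> CbN /\ (c = CbV_left -> is_value A).

Ltac flags := unfold valid_arg, fun_surface, arg_surface in *;
  intuition (try congruence; try exact I; eauto using value_subst, value_subst_inv).

Lemma valid_arg_liftE c k N : valid_arg c (lift k N) <-> valid_arg c N.
Proof. unfold valid_arg; rewrite value_liftE; tauto. Qed.

Lemma fun_surface_liftE c k N : fun_surface c (lift k N) <-> fun_surface c N.
Proof. unfold fun_surface; rewrite value_liftE; tauto. Qed.

Lemma arg_surface_liftE c k A : arg_surface c (lift k A) <-> arg_surface c A.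
Proof. unfold arg_surface; rewrite value_liftE; tauto. Qed.

Lemma valid_arg_subst c k u N : valid_arg c u -> valid_arg c N -> valid_arg c (subst k u N).
Proof. flags. Qed.

Lemma fun_surface_subst c k u N : valid_arg c u -> fun_surface c N -> fun_surface c (subst k u N).
Proof. flags. Qed.

Lemma arg_surface_subst c k u A : valid_arg c u -> arg_surface c A -> arg_surface c (subst k u A).
Proof. flags. Qed.

Lemma fun_surface_subst_inv c k u N : fun_surface c (subst k u N) -> fun_surface c N.
Proof. flags. Qed.

Lemma arg_surface_subst_inv c k u A : arg_surface c (subst k u A) -> arg_surface c A.
Proof. flags. Qed.

Lemma rule_inv c (M N : term) : rule c M N ->
  exists B C, M = App (Lam B) C /\ valid_arg c C /\ N = subst0 C B.
Proof. destruct c; destruct 1; do 2 eexists; unfold valid_arg; eauto. Qed.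

Lemma rule_beta c (B C : term) : valid_arg c C -> rule c (App (Lam B) C) (subst0 C B).
Proof. destruct c; intros [E | HC]; try discriminate; constructor; auto. Qed.

Inductive surface (c : calculus) : term -> term -> Prop :=
| surface_beta B N : valid_arg c N -> surface c (App (Lam B) N) (subst0 N B)
| surface_lam A A' : c = CbN -> surface c A A' -> surface c (Lam A) (Lam A')
| surface_appl A A' N : fun_surface c N -> surface c A A' -> surface c (App A N) (App A' N)
| surface_appr A N N' : arg_surface c A -> surface c N N' -> surface c (App A N) (App A N').

Lemma surfE c (M N : term) : surf c M N <-> surface c M N.
Proof.
  split.
  - destruct c; simpl; induction 1;
      try match goal with
          | H : beta_rule _ _ |- _ => destruct H
          | H : betav_rule _ _ |- _ => destruct H end;
      constructor; flags.
  - induction 1; destruct c; simpl in *;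
      try solve [constructor; constructor; flags | constructor; flags | flags].
Qed.

Lemma normal_surfE c (M : term) : normal (surf c) M <-> normal (surface c) M.
Proof. unfold normal; split; intros H N HN; apply (H N), surfE, HN. Qed.

Lemma rule_surface c (M N : term) : rule c M N -> surface c M N.
Proof. intros (B & C & -> & HC & ->)%rule_inv; now constructor. Qed.

Lemma surface_step c (M N : term) : surface c M N -> step c M N.
Proof.
  induction 1; [apply full_rule, rule_beta | apply full_lam | apply full_appl | apply full_appr];
    auto.
Qed.

Lemma surface_var c n (X : term) : ~ surface c (Var n) X.
Proof. inversion 1. Qed.

Lemma surface_opr c o l (X : term) : ~ surface c (Opr o l) X.
Proof. inversion 1. Qed.

Lemma surface_value c (V X : term) : c <> CbN -> is_value V -> ~ surface c V X.
Proof. intros Hc HV H; destruct H; simpl in HV; tauto. Qed.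

Lemma fun_surface_step c (N N' : term) : fun_surface c N -> surface c N N' -> fun_surface c N'.
Proof. intros HN H Hc; exfalso; apply (surface_value c N N'); auto; congruence. Qed.

Lemma arg_surface_step c (A A' : term) : arg_surface c A -> surface c A A' -> arg_surface c A'.
Proof.
  intros [HcN HA] H; split; auto; intros Hc.
  exfalso; apply (surface_value c A A'); auto.
Qed.

Lemma valid_arg_fun_surface c (N : term) : valid_arg c N -> fun_surface c N.
Proof. flags. Qed.

Lemma surface_lift c (M M' : term) k : surface c M M' -> surface c (lift k M) (lift k M').
Proof.
  intros H; revert k; induction H; intros k; simpl.
  - rewrite lift_subst0; constructor; now apply valid_arg_liftE.
  - now constructor.
  - constructor; auto; now apply fun_surface_liftE.
  - constructor; auto; now apply arg_surface_liftE.
Qed.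

Lemma surface_subst c (M M' u : term) k : valid_arg c u ->
  surface c M M' -> surface c (subst k u M) (subst k u M').
Proof.
  intros Hu H; revert k u Hu; induction H; intros k u Hu; simpl.
  - rewrite subst_subst0; constructor; now apply valid_arg_subst.
  - constructor; auto; apply IHsurface; now apply valid_arg_liftE.
  - constructor; auto; now apply fun_surface_subst.
  - constructor; auto; now apply arg_surface_subst.
Qed.

Lemma surface_diamond c (M M1 M2 : term) : surface c M M1 -> surface c M M2 ->
  M1 = M2 \/ exists P, surface c M1 P /\ surface c M2 P.
Proof.
  intros H1; revert M2; induction H1 as [B N HN | A A1 Hc HA IH | A A1 N HN HA IH
    | A N N1 HA HN IH]; intros M2 H2; inversion H2 as [B' N' HN' | A' A2 Hc' HA2
    | A' A2 N' HN' HA2 | A' N' N2 HA' HN2]; subst; auto.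
  - inversion HA2; subst; right; eexists; split;
      [apply surface_subst | constructor]; eauto.
  - exfalso; apply (surface_value c N N2); flags.
  - destruct (IH _ HA2) as [-> | (P & HP1 & HP2)]; auto.
    right; exists (Lam P); split; constructor; auto.
  - inversion HA; subst; right; eexists; split;
      [constructor | apply surface_subst]; eauto.
  - destruct (IH _ HA2) as [-> | (P & HP1 & HP2)]; auto.
    right; exists (App P N); split; constructor; auto.
  - right; exists (App A1 N2); split; constructor;
      eauto using fun_surface_step, arg_surface_step.
  - exfalso; apply (surface_value c N N1); flags.
  - right; exists (App A2 N1); split; constructor;
      eauto using fun_surface_step, arg_surface_step.
  - destruct (IH _ HN2) as [-> | (P & HP1 & HP2)]; auto.
    right; exists (App A P); split; constructor; auto.
Qed.

Lemma normal_app_fun c (A N : term) :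
  normal (surface c) (App A N) -> fun_surface c N -> normal (surface c) A.
Proof. intros Hn HN A' HA; apply (Hn (App A' N)); now constructor. Qed.

Lemma normal_app_arg c (A N : term) :
  normal (surface c) (App A N) -> arg_surface c A -> normal (surface c) N.
Proof. intros Hn HA N' HN; apply (Hn (App A N')); now constructor. Qed.

Lemma step_var c n (X : term) : ~ step c (Var n) X.
Proof. inversion 1; subst; now apply (surface_var c n X), rule_surface. Qed.

(* A step out of a surface-normal term is not at the root, so it keeps the head
   constructor. *)
Lemma normal_step_value_inv c (M M' : term) : normal (surface c) M -> step c M M' ->
  is_value M' -> is_value M.
Proof. intros Hn H; destruct H; simpl; auto; now apply rule_surface, Hn in H. Qed.

Lemma normal_step_lam_inv c (M B' : term) : normal (surface c) M -> step c M (Lam B') ->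
  exists B, M = Lam B.
Proof.
  intros Hn H; pose proof (normal_step_value_inv c _ _ Hn H I) as HM.
  destruct M; simpl in HM; try tauto; eauto; now apply step_var in H.
Qed.

Lemma step_preserves_normal c (M M' : term) : step c M M' ->
  normal (surface c) M -> normal (surface c) M'.
Proof.
  induction 1 as [M M' Hr | A A' H IH | A A' N H IH | A N N' H IH | o l1 l2 M M' H IH];
    intros Hn X HX.
  - now apply rule_surface, Hn in Hr.
  - inversion HX as [| ? A'' Hc HA |  |]; subst.
    refine (IH _ _ HA); intros Y HY; apply (Hn (Lam Y)); now constructor.
  - assert (HnA : fun_surface c N -> normal (surface c) A) by now apply normal_app_fun.
    inversion HX as [B ? HN | | ? A'' ? HN HA | ? ? N'' HA HN]; subst.
    + destruct (normal_step_lam_inv c A B) as [B0 ->]; auto using valid_arg_fun_surface.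
      apply (Hn (subst0 N B0)); now constructor.
    + exact (IH (HnA HN) _ HA).
    + apply (Hn (App A N'')); constructor; auto.
      destruct HA as [HcN HA']; split; auto; intros Hc.
      apply (normal_step_value_inv c A A'); auto; apply HnA; congruence.
  - assert (HnN : arg_surface c A -> normal (surface c) N) by now apply normal_app_arg.
    inversion HX as [B ? HN | | ? A' ? HN HA | ? ? N'' HA HN]; subst.
    + apply (Hn (subst0 N B)); constructor.
      destruct (calculus_eq_dec c CbN) as [Hc | Hc]; [now left | right].
      apply (normal_step_value_inv c N N'); [apply HnN | | ]; flags.
    + apply (Hn (App A' N)); constructor; auto; intros Hc.
      apply (normal_step_value_inv c N N'); auto; apply HnN; flags.
    + exact (IH (HnN HA) _ HN).
  - now apply surface_opr in HX.
Qed.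

(** * The unbiased reduction *)

Lemma unb_step c (M N : term) : unb c M N -> step c M N.
Proof.
  induction 1; [apply surface_step, surfE | apply full_lam | apply full_appl
    | apply full_appr | apply full_opr]; auto.
Qed.

Lemma unb_preserves_normal c (M N : term) : unb c M N ->
  normal (surf c) M -> normal (surf c) N.
Proof. rewrite !normal_surfE; intros H; apply step_preserves_normal, unb_step, H. Qed.

Lemma unb_opr_at c o k1 k2 (X X' : term) : unb c X X' ->
  unb c (Opr o (k1 ++ X :: k2)) (Opr o (k1 ++ X' :: k2)).
Proof.
  intros; apply unb_opr; auto; apply normal_surfE; intros Y HY; now apply surface_opr in HY.
Qed.

Lemma unb_opr_at2 c o k1 m k2 (Y X X' : term) : unb c X X' ->
  unb c (Opr o (k1 ++ Y :: m ++ X :: k2)) (Opr o (k1 ++ Y :: m ++ X' :: k2)).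
Proof. rewrite !app_comm_cons, !app_assoc; apply unb_opr_at. Qed.

Lemma app_cons_eq_inv {A : Type} (l1 l2 k1 k2 : list A) a b :
  l1 ++ a :: l2 = k1 ++ b :: k2 ->
  (l1 = k1 /\ a = b /\ l2 = k2) \/
  (exists m, k1 = l1 ++ a :: m /\ l2 = m ++ b :: k2) \/
  (exists m, l1 = k1 ++ b :: m /\ k2 = m ++ a :: l2).
Proof.
  revert k1; induction l1 as [| x l1 IH]; intros [| y k1] E; simpl in E;
    injection E as <- E; subst.
  - now left.
  - right; left; now exists k1.
  - right; right; now exists l1.
  - destruct (IH _ E) as [(-> & -> & ->) | [(m & -> & ->) | (m & -> & ->)]].
    + now left.
    + right; left; now exists m.
    + right; right; now exists m.
Qed.

Theorem unb_diamond c (M M1 M2 : term) : unb c M M1 -> unb c M M2 ->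
  M1 = M2 \/ exists P, unb c M1 P /\ unb c M2 P.
Proof.
  intros H1; revert M2; induction H1 as [M M1 Hs | P P1 Hn H IH | P P1 Q Hn H IH
    | P Q Q1 Hn H IH | o l1 l2 P P1 Hn H IH]; intros M2 H2;
  inversion H2 as [? ? Hs2 | ? P2 Hn2 H2' | ? P2 ? Hn2 H2' | ? ? Q2 Hn2 H2'
    | ? k1 k2 R R2 Hn2 H2']; subst;
  try match goal with Hn : normal _ ?X, Hs : surf _ ?X _ |- _ => exfalso; exact (Hn _ Hs) end.
  - rewrite surfE in Hs, Hs2; destruct (surface_diamond c M M1 M2) as [| (P & ? & ?)];
      auto; right; exists P; split; apply unb_surf, surfE; auto.
  - destruct (IH _ H2') as [-> | (R & HR1 & HR2)]; auto.
    right; exists (Lam R); split; apply unb_lam; auto;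
      eapply unb_preserves_normal; eauto; now apply unb_lam.
  - destruct (IH _ H2') as [-> | (R & HR1 & HR2)]; auto.
    right; exists (App R Q); split; apply unb_appl; auto;
      eapply unb_preserves_normal; eauto; now apply unb_appl.
  - right; exists (App P1 Q2); split.
    + apply unb_appr; auto; eapply unb_preserves_normal; [apply unb_appl |]; eauto.
    + apply unb_appl; auto; eapply unb_preserves_normal; [apply unb_appr |]; eauto.
  - right; exists (App P2 Q1); split.
    + apply unb_appl; auto; eapply unb_preserves_normal; [apply unb_appr |]; eauto.
    + apply unb_appr; auto; eapply unb_preserves_normal; [apply unb_appl |]; eauto.
  - destruct (IH _ H2') as [-> | (R & HR1 & HR2)]; auto.
    right; exists (App P R); split; apply unb_appr; auto;
      eapply unb_preserves_normal; eauto; now apply unb_appr.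
  - match goal with E : _ ++ _ :: _ = _ ++ _ :: _ |- _ =>
      destruct (app_cons_eq_inv _ _ _ _ _ _ E)
        as [(-> & -> & ->) | [(m & -> & ->) | (m & -> & ->)]] end;
      rewrite <- ?app_assoc; simpl.
    + destruct (IH _ H2') as [-> | (R' & HR1 & HR2)]; auto.
      right; exists (Opr o (l1 ++ R' :: l2)); split; now apply unb_opr_at.
    + right; exists (Opr o (k1 ++ R2 :: m ++ P1 :: l2)).
      split; [apply unb_opr_at | apply unb_opr_at2]; auto.
    + right; exists (Opr o (l1 ++ P1 :: m ++ R2 :: k2)).
      split; [apply unb_opr_at2 | apply unb_opr_at]; auto.
Qed.

Lemma surf_normal_or_step c (M : term) : normal (surf c) M \/ exists X, surf c M X.
Proof.
  destruct (classic (exists X, surf c M X)) as [H | H]; [now right | left].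
  intros X HX; apply H; eauto.
Qed.

Lemma step_unb c (M N : term) : step c M N -> exists N', unb c M N'.
Proof.
  induction 1 as [M M' Hr | A A' _ [X HX] | A A' N _ [X HX] | A N N' _ [X HX]
    | o l1 l2 P P' _ [X HX]].
  - exists M'; apply unb_surf, surfE, rule_surface, Hr.
  - destruct (surf_normal_or_step c (Lam A)) as [Hn | [Y HY]];
      eexists; [apply unb_lam | apply unb_surf]; eauto.
  - destruct (surf_normal_or_step c (App A N)) as [Hn | [Y HY]];
      eexists; [apply unb_appl | apply unb_surf]; eauto.
  - destruct (surf_normal_or_step c (App A N)) as [Hn | [Y HY]];
      eexists; [apply unb_appr | apply unb_surf]; eauto.
  - eexists; apply unb_opr_at, HX.
Qed.

Theorem normal_unbE c (M : term) : normal (unb c) M <-> normal (step c) M.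
Proof.
  split; intros Hn N HN.
  - destruct (step_unb c M N HN) as [N' HN']; exact (Hn N' HN').
  - exact (Hn N (unb_step c M N HN)).
Qed.

(** * Parallel reduction and surface factorization *)

Inductive par (c : calculus) : term -> term -> Prop :=
| par_var n : par c (Var n) (Var n)
| par_lam A A' : par c A A' -> par c (Lam A) (Lam A')
| par_app A A' C C' : par c A A' -> par c C C' -> par c (App A C) (App A' C')
| par_opr o l l' : parl c l l' -> par c (Opr o l) (Opr o l')
| par_beta B B' N N' : par c B B' -> par c N N' -> valid_arg c N ->
    par c (App (Lam B) N) (subst0 N' B')
with parl (c : calculus) : list term -> list term -> Prop :=
| parl_nil : parl c nil nil
| parl_cons a a' l l' : par c a a' -> parl c l l' -> parl c (a :: l) (a' :: l').

Scheme par_mind := Induction for par Sort Prop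
  with parl_mind := Induction for parl Sort Prop.

Lemma par_refl c (t : term) : par c t t.
Proof.
  induction t as [| | | o l Hl] using tm_nested_ind; constructor; auto.
  induction Hl; constructor; auto.
Qed.

Lemma parl_refl c (l : list term) : parl c l l.
Proof. induction l; constructor; auto using par_refl. Qed.

Lemma par_lift c (M M' : term) k : par c M M' -> par c (lift k M) (lift k M').
Proof.
  intros H; revert k.
  induction H using par_mind with
    (P0 := fun l l' _ => forall k, parl c (map (lift k) l) (map (lift k) l'));
    intros k; simpl; try solve [constructor; auto].
  - apply par_refl.
  - rewrite lift_subst0; constructor; auto; now apply valid_arg_liftE.
Qed.

Lemma parl_lift c (l l' : list term) k : parl c l l' -> parl c (map (lift k) l) (map (lift k) l').
Proof. induction 1; constructor; auto using par_lift. Qed.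

Lemma par_subst c (M M' u u' : term) k : par c M M' -> par c u u' -> valid_arg c u ->
  par c (subst k u M) (subst k u' M').
Proof.
  intros H; revert k u u'.
  induction H using par_mind with
    (P0 := fun l l' _ => forall k u u', par c u u' -> valid_arg c u ->
             parl c (map (subst k u) l) (map (subst k u') l'));
    intros k u u' Hu Hv; simpl; try solve [constructor; auto].
  - destruct (n =? k); auto; destruct (n <? k); constructor.
  - constructor; apply IHpar; [apply par_lift | apply valid_arg_liftE]; auto.
  - rewrite subst_subst0; constructor; auto using valid_arg_subst.
    apply IHpar1; [apply par_lift | apply valid_arg_liftE]; auto.
Qed.

Lemma parl_subst c (l l' : list term) k u u' : parl c l l' -> par c u u' -> valid_arg c u ->
  parl c (map (subst k u) l) (map (subst k u') l').
Proof. induction 1; constructor; auto using par_subst. Qed.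

Lemma par_value c (V V' : term) : par c V V' -> is_value V -> is_value V'.
Proof. destruct 1; simpl; tauto. Qed.

Lemma step_par c (M M' : term) : step c M M' -> par c M M'.
Proof.
  induction 1 as [M M' Hr | | | | o l1 l2 M M' _ IH]; try (constructor; auto using par_refl).
  - apply rule_inv in Hr as (B & C & -> & HC & ->); constructor; auto using par_refl.
  - induction l1; simpl; constructor; auto using par_refl, parl_refl.
Qed.

Lemma rt_map (R S : term -> term -> Prop) (f : term -> term) :
  (forall x y, R x y -> S (f x) (f y)) -> forall x y, rt R x y -> rt S (f x) (f y).
Proof.
  intros Hf x y H; induction H; [apply rt_step, Hf | apply rt_refl | eapply rt_trans]; eauto.
Qed.

Lemma rt_opr (R : term -> term -> Prop) o :
  (forall k1 k2 M M', R M M' -> R (Opr o (k1 ++ M :: k2)) (Opr o (k1 ++ M' :: k2))) ->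
  forall l l', Forall2 (rt R) l l' -> rt R (Opr o l) (Opr o l').
Proof.
  intros HR l l' H; change l with ([] ++ l); change l' with ([] ++ l').
  generalize (@nil term) as pre; induction H as [| x y l l' Hxy _ IH]; intros pre.
  - apply rt_refl.
  - apply rt_trans with (Opr o (pre ++ y :: l)).
    + apply (rt_map R R (fun t => Opr o (pre ++ t :: l))); auto.
    + specialize (IH (pre ++ [y])); rewrite <- !app_assoc in IH; exact IH.
Qed.

Lemma par_rt_step c (M M' : term) : par c M M' -> rt (step c) M M'.
Proof.
  intros H; induction H as [| | | | B B' N N' _ IHB HpN IHN Hv | |]
    using par_mind with (P0 := fun l l' _ => Forall2 (rt (step c)) l l').
  - apply rt_refl.
  - apply (rt_map (step c) (step c) Lam); auto; intros; now apply full_lam.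
  - apply rt_trans with (App A' C).
    + apply (rt_map (step c) (step c) (fun t => App t C)); auto; intros; now apply full_appl.
    + apply (rt_map (step c) (step c) (App A')); auto; intros; now apply full_appr.
  - apply rt_opr; auto; intros; now apply full_opr.
  - apply rt_trans with (App (Lam B') N); [| apply rt_trans with (App (Lam B') N')].
    + apply (rt_map (step c) (step c) (fun t => App (Lam t) N)); auto.
      intros; now apply full_appl, full_lam.
    + apply (rt_map (step c) (step c) (App (Lam B'))); auto; intros; now apply full_appr.
    + apply rt_step, full_rule, rule_beta.
      destruct Hv as [| HN]; [now left | right]; eauto using par_value.
  - constructor.
  - now constructor.
Qed.

Lemma rt_surface_lam c (A A0 : term) : c = CbN -> rt (surface c) A A0 ->
  rt (surface c) (Lam A) (Lam A0).
Proof. intros Hc; apply (rt_map (surface c) (surface c) Lam); now constructor. Qed.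

Lemma rt_surface_appl c (A A0 C : term) : fun_surface c C -> rt (surface c) A A0 ->
  rt (surface c) (App A C) (App A0 C).
Proof. intros HC; apply (rt_map (surface c) (surface c) (fun t => App t C)); now constructor. Qed.

Lemma rt_surface_appr c (A C C0 : term) : arg_surface c A -> rt (surface c) C C0 ->
  rt (surface c) (App A C) (App A C0).
Proof. intros HA; apply (rt_map (surface c) (surface c) (App A)); now constructor. Qed.

(* Internal parallel reduction: parallel reduction firing no redex in surface
   position.  Whether a position is surface is read off the source term. *)
Inductive ipar (c : calculus) : term -> term -> Prop :=
| ipar_var n : ipar c (Var n) (Var n)
| ipar_lam A A' : par c A A' -> (c = CbN -> ipar c A A') -> ipar c (Lam A) (Lam A')
| ipar_app A A' C C' : par c A A' -> par c C C' ->
    (fun_surface c C -> ipar c A A') -> (arg_surface c A -> ipar c C C') ->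
    ipar c (App A C) (App A' C')
| ipar_opr o l l' : parl c l l' -> ipar c (Opr o l) (Opr o l').

Lemma ipar_par c (M N : term) : ipar c M N -> par c M N.
Proof. destruct 1; now constructor. Qed.

Lemma ipar_valueE c (M N : term) : ipar c M N -> (is_value M <-> is_value N).
Proof. destruct 1; simpl; tauto. Qed.

Lemma ipar_lift c (M M' : term) k : ipar c M M' -> ipar c (lift k M) (lift k M').
Proof.
  intros H; revert k; induction H as [n | A A' HA _ IH | A A' C C' HA HC _ IHA _ IHC
    | o l l' Hl]; intros k; simpl.
  - destruct (n <? k); constructor.
  - constructor; auto using par_lift.
  - constructor; auto using par_lift.
    + intros HF; apply IHA; now rewrite fun_surface_liftE in HF.
    + intros HF; apply IHC; now rewrite arg_surface_liftE in HF.
  - constructor; auto using parl_lift.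
Qed.

Lemma par_value_ipar c (V V' : term) : c <> CbN -> is_value V -> par c V V' -> ipar c V V'.
Proof. intros Hc HV H; destruct H; simpl in HV; try tauto; constructor; auto; congruence. Qed.

Lemma ipar_subst c (B0 B' u u' : term) k : ipar c B0 B' -> par c u u' -> ipar c u u' ->
  valid_arg c u -> ipar c (subst k u B0) (subst k u' B').
Proof.
  intros H; revert k u u'; induction H as [n | A A' HA _ IH | A A' C C' HA HC _ IHA _ IHC
    | o l l' Hl]; intros k u u' Hp Hi Hv; simpl.
  - destruct (n =? k); auto; destruct (n <? k); constructor.
  - constructor; [apply par_subst | intros Hc; apply IH];
      rewrite ?valid_arg_liftE; auto using par_lift, ipar_lift.
  - constructor; auto using par_subst.
    + intros HF; apply IHA; eauto using fun_surface_subst_inv.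
    + intros HF; apply IHC; eauto using arg_surface_subst_inv.
  - constructor; auto using parl_subst.
Qed.

Lemma fun_surface_CbN (N : term) : fun_surface CbN N.
Proof. flags. Qed.

(* Under head reduction the substituted term can land in head position, where it
   must first be reduced to its internal part. *)
Lemma ipar_subst_head (B0 B' u u' u0 : term) k : ipar CbN B0 B' -> par CbN u u' ->
  rt (surface CbN) u u0 -> ipar CbN u0 u' ->
  exists X, rt (surface CbN) (subst k u B0) X /\ ipar CbN X (subst k u' B').
Proof.
  intros H; revert k u u' u0; induction H as [n | A A' HA _ IH | A A' C C' HA HC HiA IHA _ _
    | o l l' Hl]; intros k u u' u0 Hp Hr Hi; simpl.
  - destruct (n =? k); [now exists u0 |].
    exists (if n <? k then Var n else Var (pred n)).
    split; [apply rt_refl | destruct (n <? k); constructor].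
  - destruct (IH eq_refl (S k) (lift 0 u) (lift 0 u') (lift 0 u0)) as (X & HX & HiX);
      auto using par_lift, ipar_lift.
    + apply (rt_map (surface CbN) (surface CbN) (lift 0)); auto using surface_lift.
    + exists (Lam X); split; [apply rt_surface_lam | constructor]; auto using ipar_par.
  - destruct (IHA (fun_surface_CbN C) k u u' u0) as (X & HX & HiX); auto.
    exists (App X (subst k u C)); split.
    + apply rt_surface_appl; auto using fun_surface_CbN.
    + constructor; auto using ipar_par, fun_surface_CbN.
      * apply par_subst; auto; now left.
      * now intros [].
  - exists (Opr o (map (subst k u) l)); split; [apply rt_refl | constructor].
    apply parl_subst; auto; now left.
Qed.

Lemma ipar_fun_surfaceE c (A A' C C' : term) : ipar c (App A C) (App A' C') ->
  (fun_surface c C <-> fun_surface c C').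
Proof.
  inversion 1 as [| | ? ? ? ? _ _ _ HiC |]; subst; unfold fun_surface.
  split; intros HF Hc; subst c;
    apply (ipar_valueE CbV_right C C'); auto; apply HiC; flags.
Qed.

Lemma ipar_arg_surfaceE c (A A' C C' : term) : ipar c (App A C) (App A' C') ->
  (arg_surface c A <-> arg_surface c A').
Proof.
  inversion 1 as [| | ? ? ? ? _ _ HiA _ |]; subst; unfold arg_surface.
  split; intros [HcN HV]; split; auto; intros Hc; subst c;
    apply (ipar_valueE CbV_left A A'); auto; apply HiA; flags.
Qed.

Lemma ipar_valid_argE c (B A' C C' : term) : ipar c (App (Lam B) C) (App A' C') ->
  (valid_arg c C <-> valid_arg c C').
Proof.
  inversion 1 as [| | ? ? ? ? _ _ _ HiC |]; subst; unfold valid_arg.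
  destruct (calculus_eq_dec c CbN) as [-> | Hc]; [tauto |].
  rewrite (ipar_valueE c C C'); [tauto | apply HiC; flags].
Qed.

Lemma par_factor c (M N : term) : par c M N ->
  exists M0, rt (surface c) M M0 /\ ipar c M0 N.
Proof.
  intros H; induction H as [n | A A' HA (A0 & HA0 & HiA) | A A' C C' HA (A0 & HA0 & HiA)
    HC (C0 & HC0 & HiC) | o l l' Hl _ | B B' N N' HB (B0 & HB0 & HiB) HN (N0 & HN0 & HiN) Hv
    | |] using par_mind with (P0 := fun _ _ _ => True); auto.
  - exists (Var n); split; [apply rt_refl | constructor].
  - destruct (calculus_eq_dec c CbN) as [Hc | Hc].
    + exists (Lam A0); split; [apply rt_surface_lam | constructor]; auto using ipar_par.
    + exists (Lam A); split; [apply rt_refl | constructor]; auto; congruence.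
  - destruct c.
    + exists (App A0 C); split; [apply rt_surface_appl | constructor];
        flags; auto using ipar_par.
    + exists (App A0 C0); split.
      * apply rt_trans with (App A0 C); [apply rt_surface_appl | apply rt_surface_appr]; flags.
      * constructor; auto using ipar_par.
    + destruct (value_dec A0) as [HV | HV].
      * exists (App A0 C0); split.
        -- apply rt_trans with (App A0 C); [apply rt_surface_appl | apply rt_surface_appr]; flags.
        -- constructor; auto using ipar_par.
      * exists (App A0 C); split; [apply rt_surface_appl | constructor];
          flags; auto using ipar_par.
    + destruct (value_dec C0) as [HV | HV].
      * exists (App A0 C0); split.
        -- apply rt_trans with (App A C0); [apply rt_surface_appr | apply rt_surface_appl]; flags.
        -- constructor; auto using ipar_par.
      * exists (App A C0); split; [apply rt_surface_appr | constructor];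
          flags; auto using ipar_par.
  - exists (Opr o l); split; [apply rt_refl | now constructor].
  - assert (Hs : rt (surface c) (App (Lam B) N) (subst0 N B0)).
    { apply rt_trans with (subst0 N B); [now apply rt_step, surface_beta |].
      apply (rt_map (surface c) (surface c) (subst0 N)); auto.
      intros; now apply surface_subst. }
    destruct (calculus_eq_dec c CbN) as [-> | Hc].
    + destruct (ipar_subst_head B0 B' N N' N0 0) as (X & HX & HiX); auto.
      exists X; split; [apply rt_trans with (subst0 N B0) |]; auto.
    + exists (subst0 N B0); split; auto.
      apply ipar_subst; auto using ipar_par.
      apply par_value_ipar; auto; destruct Hv; tauto.
Qed.

Lemma ipar_surface_swap c (M N P : term) : ipar c M N -> surface c N P ->
  exists Q, surface c M Q /\ par c Q P.
Proof.
  intros Hi Hs; revert M Hi.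
  induction Hs as [B' N HN | A1 A1' Hc HA IH | A1 A1' N HN HA IH | A1 N1 N1' HA HN IH];
    intros M Hi; inversion Hi as [| A A' HpA HiA | A A' C C' HpA HpC HiA HiC |]; subst.
  - assert (HF : fun_surface c C)
      by now apply (ipar_fun_surfaceE _ _ _ _ _ Hi), valid_arg_fun_surface.
    specialize (HiA HF); inversion HiA as [| B ? HpB _ | |]; subst.
    exists (subst0 C B); split.
    + constructor; now apply (ipar_valid_argE _ _ _ _ _ Hi).
    + apply par_subst; auto; now apply (ipar_valid_argE _ _ _ _ _ Hi).
  - destruct (IH _ (HiA eq_refl)) as (Q & HQ & HpQ).
    exists (Lam Q); split; constructor; auto.
  - destruct (IH A) as (Q & HQ & HpQ); [apply HiA, (ipar_fun_surfaceE _ _ _ _ _ Hi), HN |].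
    exists (App Q C); split; constructor; auto.
    apply (ipar_fun_surfaceE _ _ _ _ _ Hi), HN.
  - destruct (IH C) as (Q & HQ & HpQ); [apply HiC, (ipar_arg_surfaceE _ _ _ _ _ Hi), HA |].
    exists (App A Q); split; constructor; auto.
    apply (ipar_arg_surfaceE _ _ _ _ _ Hi), HA.
Qed.

Lemma ipar_reflects_normal c (M N : term) : ipar c M N ->
  normal (surface c) N -> normal (surface c) M.
Proof.
  intros Hi Hn X Hs; revert N Hi Hn.
  induction Hs as [B C HC | A A1 Hc HA IH | A A1 C HC HA IH | A C C1 HA HC IH];
    intros N Hi Hn; inversion Hi as [| ? A' HpA HiA | ? A' ? C' HpA HpC HiA HiC |]; subst.
  - specialize (HiA (valid_arg_fun_surface _ _ HC)); inversion HiA as [| ? B' | |]; subst.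
    apply (Hn (subst0 C' B')); constructor; now apply (ipar_valid_argE _ _ _ _ _ Hi).
  - refine (IH _ (HiA eq_refl) _); intros Y HY; apply (Hn (Lam Y)); now constructor.
  - refine (IH _ (HiA HC) _); apply (normal_app_fun c A' C'); auto.
    now apply (ipar_fun_surfaceE _ _ _ _ _ Hi).
  - refine (IH _ (HiC HA) _); apply (normal_app_arg c A' C'); auto.
    now apply (ipar_arg_surfaceE _ _ _ _ _ Hi).
Qed.

Lemma rt_surface_ipar_swap c (M1 Z : term) : clos_refl_trans_1n _ (surface c) M1 Z ->
  forall Y, ipar c Y M1 -> exists Z', rt (surface c) Y Z' /\ ipar c Z' Z.
Proof.
  induction 1 as [| x y z Hxy _ IH]; intros Y Hi.
  - exists Y; split; auto using rt_refl.
  - destruct (ipar_surface_swap c Y x y Hi Hxy) as (Q & HQ & HpQ).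
    destruct (par_factor c Q y HpQ) as (Q0 & HQ0 & HiQ0).
    destruct (IH Q0 HiQ0) as (Z' & HZ' & HiZ').
    exists Z'; split; auto.
    apply rt_trans with Q; [now apply rt_step | now apply rt_trans with Q0].
Qed.

Theorem factorization c (M N : term) : rt (step c) M N ->
  exists Z, rt (surface c) M Z /\ rt (ipar c) Z N.
Proof.
  intros H; apply clos_rt_rt1n in H; induction H as [M | M Y N HMY _ (Z1 & HZ1 & HiZ1)].
  - exists M; split; apply rt_refl.
  - destruct (par_factor c M Y (step_par c M Y HMY)) as (Y0 & HY0 & HiY0).
    apply clos_rt_rt1n in HZ1.
    destruct (rt_surface_ipar_swap c Y Z1 HZ1 Y0 HiY0) as (Z2 & HZ2 & HiZ2).
    exists Z2; split; [now apply rt_trans with Y0 | now apply rt_trans with Z1; [apply rt_step |]].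
Qed.

Lemma factorization_normal c (M N : term) : rt (step c) M N -> normal (surface c) N ->
  exists Z, rt (surface c) M Z /\ normal (surface c) Z /\ rt (step c) Z N.
Proof.
  intros H Hn; destruct (factorization c M N H) as (Z & HZ & HiZ).
  exists Z; repeat split; auto.
  - clear H HZ; induction HiZ; eauto using ipar_reflects_normal.
  - clear H HZ Hn; induction HiZ; eauto using rt_refl, rt_trans, par_rt_step, ipar_par.
Qed.

(** * Normalizing reductions *)

Definition congruent (R : term -> term -> Prop) (M N : term) : Prop :=
  match M, N with
  | Var n, Var m => n = m
  | Lam P, Lam P' => R P P'
  | App P Q, App P' Q' => R P P' /\ R Q Q'
  | Opr o l, Opr o' l' => o = o' /\ Forall2 R l l'
  | _, _ => False
  end.

Lemma Forall2_rt_step_at (R : term -> term -> Prop) l1 l2 l' (M M' : term) :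
  R M M' -> Forall2 (rt R) (l1 ++ M' :: l2) l' -> Forall2 (rt R) (l1 ++ M :: l2) l'.
Proof.
  revert l'; induction l1; simpl; intros l' HR H; inversion H; subst; constructor; auto.
  now apply rt_trans with M'; [apply rt_step |].
Qed.

Lemma rt_step_preserves_normal c (M N : term) : rt (step c) M N ->
  normal (surface c) M -> normal (surface c) N.
Proof. induction 1; eauto using step_preserves_normal. Qed.

Lemma rt_step_congruent c (M N : term) : normal (surface c) M -> rt (step c) M N ->
  congruent (rt (step c)) M N.
Proof.
  intros Hn H; apply clos_rt_rt1n in H; induction H as [M | M Y N HMY _ IH].
  - destruct M; simpl; auto using rt_refl.
    split; auto; clear Hn; induction l; constructor; auto using rt_refl.
  - specialize (IH (step_preserves_normal c M Y HMY Hn)).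
    destruct HMY as [? ? Hr | P P' HP | P P' Q HP | P Q Q' HQ | o l1 l2 P P' HP];
      [now apply rule_surface, Hn in Hr | ..];
      destruct N; simpl in IH |- *; try contradiction.
    + now apply rt_trans with P'; [apply rt_step |].
    + destruct IH; split; auto; now apply rt_trans with P'; [apply rt_step |].
    + destruct IH; split; auto; now apply rt_trans with Q'; [apply rt_step |].
    + destruct IH as [-> IH]; split; auto; now apply Forall2_rt_step_at with P'.
Qed.

Lemma rt_unb_context c (F : term -> term) :
  (forall X X', unb c X X' -> normal (surf c) (F X) -> unb c (F X) (F X')) ->
  forall P P', rt (unb c) P P' -> normal (surf c) (F P) -> rt (unb c) (F P) (F P').
Proof.
  intros HF P P' H; apply clos_rt_rt1n in H; induction H as [| x y z Hxy _ IH]; intros Hn.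
  - apply rt_refl.
  - apply rt_trans with (F y); [now apply rt_step, HF |].
    apply IH; eapply unb_preserves_normal; eauto.
Qed.

Lemma rt_surface_unb c (M N : term) : rt (surface c) M N -> rt (unb c) M N.
Proof. apply (rt_map _ _ id); intros; now apply unb_surf, surfE. Qed.

Lemma normal_step_surface c (M : term) : normal (step c) M -> normal (surface c) M.
Proof. intros Hn X HX; exact (Hn X (surface_step c M X HX)). Qed.

Lemma normal_step_opr_arg c o l (N : term) : normal (step c) (Opr o l) -> In N l ->
  normal (step c) N.
Proof.
  intros Hn HN; apply in_split in HN as (l1 & l2 & ->).
  intros Y HY; apply (Hn (Opr o (l1 ++ Y :: l2))); now apply full_opr.
Qed.

Lemma Forall2_Forall_impl {A B : Type} (R S : A -> B -> Prop) (P : B -> Prop) l l' :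
  (forall x y, P y -> R x y -> S x y) -> Forall P l' -> Forall2 R l l' -> Forall2 S l l'.
Proof. intros H HP HR; induction HR; inversion HP; subst; constructor; auto. Qed.

Theorem rt_step_normal_unb c (M N : term) : normal (step c) N -> rt (step c) M N ->
  rt (unb c) M N.
Proof.
  revert M; induction N as [n | N IH | N1 N2 IH1 IH2 | o l IH] using tm_nested_ind;
    intros M HN HM;
    destruct (factorization_normal c M _ HM (normal_step_surface c _ HN))
      as (Z & HMZ & HnZ & HZN);
    apply rt_trans with Z; auto using rt_surface_unb;
    pose proof (rt_step_congruent c Z _ HnZ HZN) as HC;
    destruct Z as [m | Z | Z1 Z2 | o' l']; simpl in HC; try contradiction;
    rewrite <- normal_surfE in HnZ.
  - subst; apply rt_refl.
  - apply (rt_unb_context c Lam); auto; [intros; now apply unb_lam |].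
    apply IH; auto; intros Y HY; apply (HN (Lam Y)); now apply full_lam.
  - destruct HC as [HC1 HC2].
    assert (HZ1 : rt (unb c) Z1 N1)
      by (apply IH1; auto; intros Y HY; apply (HN (App Y N2)); now apply full_appl).
    assert (HZ2 : rt (unb c) Z2 N2)
      by (apply IH2; auto; intros Y HY; apply (HN (App N1 Y)); now apply full_appr).
    apply rt_trans with (App N1 Z2).
    + apply (rt_unb_context c (fun t => App t Z2)); auto; intros; now apply unb_appl.
    + apply (rt_unb_context c (App N1)); auto; [intros; now apply unb_appr |].
      apply normal_surfE, rt_step_preserves_normal with (App Z1 Z2); [| now apply normal_surfE].
      apply (rt_map (step c) (step c) (fun t => App t Z2)); auto; intros; now apply full_appl.
  - destruct HC as [<- HC].
    apply rt_opr; [intros; now apply unb_opr_at |].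
    apply (Forall2_Forall_impl (rt (step c)) (rt (unb c))
      (fun y => forall x, rt (step c) x y -> rt (unb c) x y)); auto.
    apply Forall_forall; intros y Hy; rewrite Forall_forall in IH.
    intros x; apply IH; eauto using normal_step_opr_arg.
Qed.

End UnbiasedReduction.

Theorem mainTheorem4 (Op : Type) (arity : Op -> nat) (c : calculus) :
  (* 1. RD-diamond *)
  (forall M M1 M2 : tm Op, wf arity M ->
     unb c M M1 -> unb c M M2 ->
     M1 = M2 \/ exists P, unb c M1 P /\ unb c M2 P)
  /\
  (* 2. same normal forms as ->_{beta_bullet} *)
  (forall M : tm Op, wf arity M ->
     (normal (unb c) M <-> normal (step c) M))
  /\
  (* 3. normalizing reductions are captured *)
  (forall M N : tm Op, wf arity M ->
     normal (step c) N ->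
     clos_refl_trans _ (step c) M N ->
     clos_refl_trans _ (unb c) M N).
Proof.
  split; [| split].
  - intros M M1 M2 _; apply unb_diamond.
  - intros M _; apply normal_unbE.
  - intros M N _; apply rt_step_normal_unb.
Qed.
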